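(* Let $\mathcal{H}\subseteq\{0,1\}^{\mathcal{X}}$ be a concept class over an arbitrary domain $\mathcal{X}$ and let $m\in\mathbb{N}$. Then $\omega_m\le\omega^\star_m\le 2^m$, where $\omega_m$ and $\omega^\star_m$ are the clique number and fractional clique number of the contradiction graph $G_m(\mathcal{H})$.
   Context: For $m\in\mathbb{N}$, a dataset of size $m$ is a sequence $S=((x_1,y_1),\dots,(x_m,y_m))\in(\mathcal{X}\times\{0,1\})^m$; a hypothesis $h\in\{0,1\}^{\mathcal{X}}$ is consistent with $S$ if $h(x_i)=y_i$ for all $i$; $S$ is $\mathcal{H}$-realizable if some $h\in\mathcal{H}$ is consistent with $S$. We write $(x,y)\in S$ if $(x,y)=(x_i,y_i)$ for some $i$. Let $V_m(\mathcal{H})$ be the set of $\mathcal{H}$-realizable datasets of size $m$. The contradiction graph of order $m$, $G_m(\mathcal{H})$, is the undirected graph with vertex set $V_m(\mathcal{H})$ in which two datasets $S,S'$ are adjacent iff there is $x\in\mathcal{X}$ with $(x,0)\in S$ and $(x,1)\in S'$. $\omega_m$ is the clique number of $G_m(\mathcal{H})$ (supremum of sizes of cliques). A fractional clique of a graph $G=(V,E)$ is a function $\delta:V\to[0,\infty)$ with $\sum_{v\in I}\delta(v)\le 1$ for every independent set $I$ of $G$; its size is $|\delta|=\sum_{v\in V}\delta(v)$; the fractional clique number $\omega^\star(G)$ is the supremum of the sizes of fractional cliques, and $\omega^\star_m:=\omega^\star(G_m(\mathcal{H}))$. *)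

From mathcomp Require Import all_boot all_order all_algebra.
From mathcomp Require Import all_classical all_reals.
From mathcomp Require Import ereal esum.

Set Implicit Arguments. Unset Strict Implicit. Unset Printing Implicit Defensive.
Import Order.TTheory GRing.Theory Num.Theory.
Local Open Scope classical_set_scope.
Local Open Scope ring_scope.

Definition dataset (X : Type) (m : nat) : choiceType := {classic ('I_m -> X * bool)}.

Definition in_dataset (X : Type) (m : nat) (p : X * bool) (S : dataset X m) : Prop :=
  exists i : 'I_m, S i = p.

Definition consistent (X : Type) (m : nat) (h : X -> bool) (S : dataset X m) : Prop :=
  forall i : 'I_m, h (S i).1 = (S i).2.

Definition realizable (X : Type) (H : set (X -> bool)) (m : nat) (S : dataset X m) : Prop :=
  exists2 h, H h & consistent h S.

Definition Vm (X : Type) (H : set (X -> bool)) (m : nat) : set (dataset X m) :=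
  [set S | realizable H S].

Definition contra (X : Type) (m : nat) (S S' : dataset X m) : Prop :=
  exists x : X, in_dataset (x, false) S /\ in_dataset (x, true) S'.

Definition adjacent (X : Type) (m : nat) (S S' : dataset X m) : Prop :=
  contra S S' \/ contra S' S.

Definition is_clique (X : Type) (H : set (X -> bool)) (m n : nat)
  (f : 'I_n -> dataset X m) : Prop :=
  injective f /\ (forall i, @Vm X H m (f i)) /\
  (forall i j, i <> j -> adjacent (f i) (f j)).

Definition clique_number {R : realType} (X : Type) (H : set (X -> bool)) (m : nat)
  : \bar R :=
  ereal_sup [set (n%:R)%:E | n in [set n : nat | exists f, @is_clique X H m n f]].

Definition independent (X : Type) (H : set (X -> bool)) (m : nat)
  (I : set (dataset X m)) : Prop :=
  I `<=` @Vm X H m /\ (forall S S', I S -> I S' -> S <> S' -> ~ adjacent S S').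

(* fractional clique: delta : V -> [0, oo) (values off V are irrelevant and
   ignored: all sums range over subsets of V) *)
Definition frac_clique {R : realType} (X : Type) (H : set (X -> bool)) (m : nat)
  (delta : dataset X m -> R) : Prop :=
  (forall S, @Vm X H m S -> 0 <= delta S) /\
  (forall I, independent H I -> (\esum_(S in I) (delta S)%:E <= 1)%E).

Definition frac_size {R : realType} (X : Type) (H : set (X -> bool)) (m : nat)
  (delta : dataset X m -> R) : \bar R :=
  \esum_(S in @Vm X H m) (delta S)%:E.

Definition frac_clique_number {R : realType} (X : Type) (H : set (X -> bool)) (m : nat)
  : \bar R :=
  ereal_sup [set frac_size H delta | delta in [set d | @frac_clique R X H m d]].

From Pilot Require Import Defs.
From mathcomp Require Import all_boot all_order all_algebra.
From mathcomp Require Import all_classical all_reals.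
From mathcomp Require Import ereal esum.
Import Order.TTheory GRing.Theory Num.Theory.
Local Open Scope classical_set_scope.
Local Open Scope ring_scope.
Set Implicit Arguments. Unset Strict Implicit.

(* Lower bound: the indicator of an n-clique is a fractional clique of size n,
   because an independent set meets a clique in at most one vertex.

   Upper bound (averaging): datasets consistent with a common labeling g of X
   are pairwise non-adjacent, so every fractional clique gives them total
   weight at most 1.  Restrict to the finite set D of points occurring in a
   finite family of realizable datasets: a realizable dataset constrains at
   most m points of D, hence agrees with at least 2^(|D|-m) of the 2^|D|
   labelings of D.  Averaging over all labelings of D bounds the total weight
   of the family by 2^m, and the extended-real sum over V_m(H) is a supremum
   of such finite sums. *)

Lemma averaging_bound (R : realType) (G : finType) (I : eqType) (s : seq I)
    (d : I -> R) (A : I -> pred G) (c : nat) :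
  (0 < #|G|)%N ->
  (forall S, S \in s -> 0 <= d S) ->
  (forall S, S \in s -> (#|G| <= c * #|A S|)%N) ->
  (forall g, \sum_(S <- s | g \in A S) d S <= 1) ->
  \sum_(S <- s) d S <= c%:R.
Proof.
move=> G_gt0 d_ge0 A_large g_le1.
have double_count : \sum_(S <- s) d S * #|A S|%:R
    = \sum_(g : G) \sum_(S <- s | g \in A S) d S.
  under [RHS]eq_bigr do rewrite big_mkcond.
  rewrite exchange_big /=; apply: eq_bigr => S _.
  by rewrite mulr_natr -sumr_const big_mkcond.
have : #|G|%:R * \sum_(S <- s) d S <= c%:R * #|G|%:R :> R.
  rewrite mulr_sumr; apply: le_trans (_ : \sum_(S <- s) c%:R * (d S * #|A S|%:R) <= _).
    rewrite !big_seq; apply: ler_sum => S Ss.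
    rewrite mulrCA -natrM mulrC; apply: ler_wpM2l; first exact: d_ge0.
    by rewrite ler_nat; exact: A_large.
  rewrite -mulr_sumr double_count; apply: ler_wpM2l => //.
  apply: le_trans (_ : \sum_(g : G) 1 <= _); first by apply: ler_sum => g _.
  by rewrite sumr_const.
by rewrite [X in _ <= X]mulrC ler_pM2l ?ltr0n.
Qed.

Definition points (X : Type) (m : nat) (S : dataset X m) : seq {classic X} :=
  [seq ((S i).1 : {classic X}) | i <- enum 'I_m].

Lemma points_of (X : Type) (m : nat) (S : dataset X m) (i : 'I_m) :
  ((S i).1 : {classic X}) \in points S.
Proof. by apply/mapP; exists i; rewrite ?mem_enum. Qed.

Section Labelings.
Variables (X : Type) (D : seq {classic X}).

Definition extend (g : {ffun seq_sub D -> bool}) (x : X) : bool :=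
  if (insub (x : {classic X}) : option (seq_sub D)) is Some y then g y else false.

Lemma consistent_labelings_large (m : nat) (S : dataset X m) (h : X -> bool) :
  consistent h S -> {subset points S <= D} ->
  (2 ^ #|{: seq_sub D}| <= 2 ^ m * #|[pred g | `[< consistent (extend g) S >]]|)%N.
Proof.
move=> hS SD.
pose inS := [pred y : seq_sub D | val y \in points S].
pose F (y : seq_sub D) : pred bool := if inS y then pred1 (h (val y)) else predT.
have family_consistent : {subset family F <= [pred g | `[< consistent (extend g) S >]]}.
  move=> g /familyP gF; rewrite inE => i.
  have xD := SD _ (points_of S i).
  rewrite /extend insubT /= -hS.
  by have := gF (SeqSub xD); rewrite /F /= points_of => /eqP.
have card_family_F : #|family F| = (2 ^ #|[predC inS]|)%N.
  rewrite card_family foldrE big_map big_enum /=.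
  rewrite (bigID inS) /= big1 ?mul1n => [|y yin]; last by rewrite /F inE yin card1.
  rewrite (eq_bigr (fun _ => 2%N)) ?prod_nat_const // => y /negbTE yn.
  by rewrite /F inE yn card_bool.
have card_inS : (#|inS| <= m)%N.
  rewrite cardE -(size_map val) -[m](size_enum_ord m).
  rewrite -(size_map (fun i => ((S i).1 : {classic X}))).
  apply: uniq_leq_size; first by rewrite (map_inj_uniq val_inj) enum_uniq.
  by move=> x /mapP [y]; rewrite mem_enum => yP ->.
rewrite -(cardC inS) expnD; apply: leq_mul; first by rewrite leq_pexp2l.
by rewrite -card_family_F; apply: subset_leq_card; apply/fintype.subsetP.
Qed.
End Labelings.

Lemma consistent_weight_bound (R : realType) (X : Type) (m : nat)
    (s : seq (dataset X m)) (d : dataset X m -> R) :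
  (forall S, S \in s -> exists h, consistent h S) ->
  (forall S, S \in s -> 0 <= d S) ->
  (forall g : X -> bool, \sum_(S <- s | `[< consistent g S >]) d S <= 1) ->
  \sum_(S <- s) d S <= (2 ^ m)%:R.
Proof.
move=> s_consistent d_ge0 g_le1.
pose D := undup (flatten (map (@points X m) s)).
pose A (S : dataset X m) := [pred g | `[< consistent (extend (D := D) g) S >]].
apply: (averaging_bound (A := A)) => // [|S Ss|g].
- by rewrite card_ffun card_bool expn_gt0.
- have [h hS] := s_consistent S Ss.
  rewrite card_ffun card_bool; apply: consistent_labelings_large hS _ => x xS.
  by rewrite mem_undup; apply/flattenP; exists (points S); first exact: map_f.
- by under eq_bigl do rewrite inE; exact: g_le1.
Qed.

Lemma consistent_not_adjacent (X : Type) (m : nat) (g : X -> bool) (S S' : dataset X m) :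
  consistent g S -> consistent g S' -> ~ adjacent S S'.
Proof.
have no_contra (U V : dataset X m) : consistent g U -> consistent g V -> ~ Defs.contra U V.
  by move=> cU cV [x [[i ei] [j ej]]]; have := cU i; have := cV j; rewrite ei ej /= => ->.
by move=> cS cS' [/(no_contra _ _ cS cS') | /(no_contra _ _ cS' cS)].
Qed.

Lemma consistent_independent (X : Type) (H : set (X -> bool)) (m : nat)
    (g : X -> bool) (B : set (dataset X m)) :
  B `<=` @Vm X H m -> independent H (B `&` [set S | consistent g S]).
Proof.
move=> BV; split=> [S [/BV //]|S S' [_ cS] [_ cS'] _]; exact: consistent_not_adjacent cS cS'.
Qed.

Lemma frac_clique_number_le_pow2 (R : realType) (X : Type) (H : set (X -> bool)) (m : nat) :
  (@frac_clique_number R X H m <= ((2 ^ m)%N%:R)%:E)%E.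
Proof.
apply: ge_ereal_sup => _ [d [d_ge0 d_indep] <-].
apply: ge_ereal_sup => _ [B [finB BV] <-].
rewrite fsbig_finite //= sumEFin lee_fin.
apply: consistent_weight_bound => [S|S|g].
- by rewrite in_fset_set // inE => /BV [h _ hS]; exists h.
- by rewrite in_fset_set // inE => /BV /d_ge0.
have := d_indep _ (consistent_independent g BV).
rewrite esum_fset; last 2 first.
- exact: finite_setIl.
- by move=> S; rewrite inE => -[/BV /d_ge0].
rewrite fsbig_mkcondr fsbig_finite // => le1.
by rewrite -lee_fin -sumEFin big_mkcond.
Qed.

Section CliqueIndicator.
Variables (R : realType) (X : Type) (H : set (X -> bool)) (m n : nat).
Variables (f : 'I_n -> dataset X m).
Hypothesis f_clique : is_clique H f.

Definition clique_indicator (S : dataset X m) : R := if `[< range f S >] then 1 else 0.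

Lemma clique_indicator_ge0 (S : dataset X m) : (0 <= (clique_indicator S)%:E)%E.
Proof. by rewrite lee_fin /clique_indicator; case: ifP. Qed.

Lemma esum_clique_indicator (A : set (dataset X m)) :
  \esum_(S in A) (clique_indicator S)%:E = \esum_(S in A `&` range f) 1%E.
Proof.
rewrite (esumID (range f)) => [|S _]; last exact: clique_indicator_ge0.
rewrite [E in (_ + E)%E]esum1 ?adde0 => [|S [_ notf]]; last first.
  by rewrite /clique_indicator asboolF.
by apply: eq_esum => S [_ fS]; rewrite /clique_indicator asboolT.
Qed.

Lemma clique_meets_independent (I : set (dataset X m)) (i j : 'I_n) :
  independent H I -> I (f i) -> I (f j) -> i = j.
Proof.
case: f_clique => f_inj [_ f_adj] [_ I_indep] Ii Ij.
case: (eqVneq i j) => // /eqP i_neq_j; exfalso.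
by apply: (I_indep _ _ Ii Ij) => [/f_inj|]; [exact: i_neq_j | exact: f_adj].
Qed.

Lemma clique_indicator_frac_clique : frac_clique H clique_indicator.
Proof.
split=> [S _|I I_indep]; first by rewrite -lee_fin clique_indicator_ge0.
rewrite esum_clique_indicator.
have [[S0 [IS0 [i _ fi]]]|none] := pselect (exists S, (I `&` range f) S).
  have -> : I `&` range f = [set S0].
    apply/seteqP; split=> [S [IS [j _ fj]]|S ->] /=; last by split; last exists i.
    by rewrite -fj -fi; congr f; apply: (clique_meets_independent I_indep); rewrite ?fi ?fj.
  by rewrite esum_set1 // lee01.
suff -> : I `&` range f = set0 by rewrite esum_set0.
by apply/seteqP; split=> // S IS; apply: none; exists S.
Qed.

Lemma clique_indicator_size : frac_size H clique_indicator = n%:R%:E.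
Proof.
case: f_clique => f_inj [f_V _].
rewrite /frac_size esum_clique_indicator setIidr => [|S [i _ <-]]; last exact: f_V.
rewrite esum_image => [|i j _ _ /f_inj //].
rewrite esum_fset; last 2 first.
- exact: finite_finset.
- by move=> i _; exact: lee01.
rewrite (fsbig_fwiden (enum 'I_n)) ?enum_uniq //.
- by rewrite sumEFin big_enum /= sumr_const card_ord.
- by move=> i _ /=; rewrite mem_enum.
- by move=> i [_ /(_ I)].
Qed.
End CliqueIndicator.

Lemma clique_number_le_frac (R : realType) (X : Type) (H : set (X -> bool)) (m : nat) :
  (@clique_number R X H m <= frac_clique_number H m)%E.
Proof.
apply: ge_ereal_sup => _ [n [f f_clique] <-].
apply: ereal_sup_ubound; exists (clique_indicator R f).
  exact: clique_indicator_frac_clique.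
exact: clique_indicator_size.
Qed.

Theorem mainTheorem1 (R : realType) (X : Type) (H : set (X -> bool)) (m : nat) :
  (@clique_number R X H m <= frac_clique_number H m)%E /\
  (@frac_clique_number R X H m <= ((2 ^ m)%N%:R)%:E)%E.
Proof. by split; [exact: clique_number_le_frac | exact: frac_clique_number_le_pow2]. Qed.
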